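(* Let $(X,\delta,\epsilon)$ be an $X$-self-adjoint internal commutative comonoid in a $\dagger$-compact category. Then: (i) the Frobenius identity $\delta\circ\delta^\dagger=(\delta^\dagger\otimes 1_X)\circ(1_X\otimes\delta)$ holds; (ii) $\delta$ is invariant under partial transpose: $(1_X\otimes\eta_X^\dagger\otimes 1_X)\circ(\sigma_{X,X}\otimes\delta)\circ(1_X\otimes\eta_X)=\delta$; (iii) $\delta_*=\delta$ (equivalently $\delta^*=\delta^\dagger$), where $\delta_*$ is regarded as a morphism $X\to X\otimes X$ via $X^*=X$ and $(X\otimes X)^*=X^*\otimes X^*=X\otimes X$.
   Context: A $\dagger$-compact category is a symmetric monoidal category $(\mathbf{C},\otimes,\mathrm{I})$, treated as strict (associators and unitors suppressed), with symmetry $\sigma_{A,B}:A\otimes B\to B\otimes A$, equipped with a contravariant functor $(-)^\dagger$ which is the identity on objects, involutive and monoidal (structural isomorphisms unitary), together with, for each object $A$, an object $A^*$ (with $A^{**}=A$) and a morphism $\eta_A:\mathrm{I}\to A^*\otimes A$ such that $\eta_{A^*}=\sigma_{A^*,A}\circ\eta_A$ and $(\eta_{A^*}^\dagger\otimes 1_A)\circ(1_A\otimes\eta_A)=1_A$. Duals of tensor products are the canonical ones: $(A\otimes B)^*=A^*\otimes B^*$ with $\eta_{A\otimes B}=(1_{A^*}\otimes\sigma_{A,B^*}\otimes 1_B)\circ(\eta_A\otimes\eta_B)$. For $f:A\to B$ define $f^*:B^*\to A^*$ by $f^*:=(1_{A^*}\otimes\eta_{B^*}^\dagger)\circ(1_{A^*}\otimes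 f\otimes 1_{B^*})\circ(\eta_A\otimes 1_{B^*})$, and the conjugate $f_*:=(f^\dagger)^*:A^*\to B^*$. An internal commutative comonoid is $(X,\delta,\epsilon)$ with $\delta:X\to X\otimes X$, $\epsilon:X\to\mathrm{I}$ satisfying $(\delta\otimes 1_X)\circ\delta=(1_X\otimes\delta)\circ\delta$, $(\epsilon\otimes 1_X)\circ\delta=1_X=(1_X\otimes\epsilon)\circ\delta$ and $\sigma_{X,X}\circ\delta=\delta$. It is called $X$-self-adjoint if the dual of $X$ in the $\dagger$-compact structure is $X^*=X$ with $\eta_X=\delta\circ\epsilon^\dagger$, and $\delta=(1_X\otimes\delta^\dagger)\circ(\eta_X\otimes 1_X)$. *)

(* Object equalities A** = A and (A (x) B)* = A* (x) B* are kept as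
   literal (propositional) equalities, used through the cast morphism [eqhom]. *)

Set Implicit Arguments.
Unset Strict Implicit.
Unset Printing Implicit Defensive.

Record DagSMCData := MkDagSMCData {
  obj : Type;
  hom : obj -> obj -> Type;
  idm : forall A, hom A A;
  comp : forall A B C, hom B C -> hom A B -> hom A C;
  tens : obj -> obj -> obj;
  unit : obj;
  tensm : forall A B C D, hom A B -> hom C D -> hom (tens A C) (tens B D);
  assoc : forall A B C, hom (tens (tens A B) C) (tens A (tens B C));
  assoc_inv : forall A B C, hom (tens A (tens B C)) (tens (tens A B) C);
  lunit : forall A, hom (tens unit A) A;
  lunit_inv : forall A, hom A (tens unit A);
  runit : forall A, hom (tens A unit) A;
  runit_inv : forall A, hom A (tens A unit);
  sym : forall A B, hom (tens A B) (tens B A);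
  dagger : forall A B, hom A B -> hom B A
}.

Arguments idm {_} A.
Arguments comp {_ _ _ _} g f.
Arguments tens {_} A B.
Arguments unit {_}.
Arguments tensm {_ _ _ _ _} f g.
Arguments assoc {_} _ _ _.
Arguments assoc_inv {_} _ _ _.
Arguments lunit {_} A.
Arguments lunit_inv {_} A.
Arguments runit {_} A.
Arguments runit_inv {_} A.
Arguments sym {_} A B.
Arguments dagger {_ _ _} f.

Declare Scope cat_scope.
Delimit Scope cat_scope with cat.
Open Scope cat_scope.
Notation "g ∘ f" := (comp g f) (at level 40, left associativity) : cat_scope.
Notation "f ⊗ g" := (tensm f g) (at level 35, right associativity) : cat_scope.

Definition eqhom (C : DagSMCData) (A B : obj C) (e : A = B) : hom A B :=
  match e in _ = Y return hom A Y with eq_refl => idm A end.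

Record isDagSMC (C : DagSMCData) : Prop := {
  comp_idl : forall (A B : obj C) (f : hom A B), idm B ∘ f = f;
  comp_idr : forall (A B : obj C) (f : hom A B), f ∘ idm A = f;
  comp_assoc : forall (A B C0 D : obj C) (h : hom C0 D) (g : hom B C0) (f : hom A B),
      h ∘ (g ∘ f) = (h ∘ g) ∘ f;
  tens_id : forall A B : obj C, idm A ⊗ idm B = idm (tens A B);
  tens_comp : forall (A1 B1 C1 A2 B2 C2 : obj C)
      (g1 : hom B1 C1) (f1 : hom A1 B1) (g2 : hom B2 C2) (f2 : hom A2 B2),
      (g1 ∘ f1) ⊗ (g2 ∘ f2) = (g1 ⊗ g2) ∘ (f1 ⊗ f2);
  assoc_invl : forall A B C0 : obj C, assoc_inv A B C0 ∘ assoc A B C0 = idm _;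
  assoc_invr : forall A B C0 : obj C, assoc A B C0 ∘ assoc_inv A B C0 = idm _;
  lunit_invl : forall A : obj C, lunit_inv A ∘ lunit A = idm _;
  lunit_invr : forall A : obj C, lunit A ∘ lunit_inv A = idm _;
  runit_invl : forall A : obj C, runit_inv A ∘ runit A = idm _;
  runit_invr : forall A : obj C, runit A ∘ runit_inv A = idm _;
  assoc_nat : forall (A1 A2 A3 B1 B2 B3 : obj C)
      (f : hom A1 B1) (g : hom A2 B2) (h : hom A3 B3),
      assoc B1 B2 B3 ∘ ((f ⊗ g) ⊗ h) = (f ⊗ (g ⊗ h)) ∘ assoc A1 A2 A3;
  lunit_nat : forall (A B : obj C) (f : hom A B),
      lunit B ∘ (idm unit ⊗ f) = f ∘ lunit A;
  runit_nat : forall (A B : obj C) (f : hom A B),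
      runit B ∘ (f ⊗ idm unit) = f ∘ runit A;
  pentagon : forall A B C0 D : obj C,
      (idm A ⊗ assoc B C0 D) ∘ assoc A (tens B C0) D ∘ (assoc A B C0 ⊗ idm D)
      = assoc A B (tens C0 D) ∘ assoc (tens A B) C0 D;
  triangle : forall A B : obj C,
      (idm A ⊗ lunit B) ∘ assoc A unit B = runit A ⊗ idm B;
  sym_nat : forall (A1 A2 B1 B2 : obj C) (f : hom A1 B1) (g : hom A2 B2),
      sym B1 B2 ∘ (f ⊗ g) = (g ⊗ f) ∘ sym A1 A2;
  sym_invol : forall A B : obj C, sym B A ∘ sym A B = idm _;
  hexagon : forall A B C0 : obj C,
      assoc B C0 A ∘ sym A (tens B C0) ∘ assoc A B C0
      = (idm B ⊗ sym A C0) ∘ assoc B A C0 ∘ (sym A B ⊗ idm C0);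
  dagger_id : forall A : obj C, dagger (idm A) = idm A;
  dagger_comp : forall (A B C0 : obj C) (g : hom B C0) (f : hom A B),
      dagger (g ∘ f) = dagger f ∘ dagger g;
  dagger_invol : forall (A B : obj C) (f : hom A B), dagger (dagger f) = f;
  dagger_tens : forall (A1 A2 B1 B2 : obj C) (f : hom A1 B1) (g : hom A2 B2),
      dagger (f ⊗ g) = dagger f ⊗ dagger g;
  dagger_assoc : forall A B C0 : obj C, dagger (assoc A B C0) = assoc_inv A B C0;
  dagger_lunit : forall A : obj C, dagger (lunit A) = lunit_inv A;
  dagger_runit : forall A : obj C, dagger (runit A) = runit_inv A;
  dagger_sym : forall A B : obj C, dagger (sym A B) = sym B A
}.

Record CompactData (C : DagSMCData) := MkCompactData {
  dual : obj C -> obj C;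
  dual_invol : forall A, dual (dual A) = A;
  dual_tens : forall A B, dual (tens A B) = tens (dual A) (dual B);
  eta : forall A, hom unit (tens (dual A) A)
}.

Arguments dual {_} _ _.
Arguments dual_invol {_} _ _.
Arguments dual_tens {_} _ _ _.
Arguments eta {_} _ _.

Section Compact.
Variables (C : DagSMCData) (K : CompactData C).

Definition eta_dual (A : obj C) : hom unit (tens A (dual K A)) :=
  eqhom (f_equal (fun Y => tens Y (dual K A)) (dual_invol K A)) ∘ eta K (dual K A).

Record isDagCompact : Prop := {
  eta_dual_sym : forall A, eta_dual A = sym (dual K A) A ∘ eta K A;
  yanking : forall A,
      lunit A ∘ (dagger (eta_dual A) ⊗ idm A) ∘ assoc_inv A (dual K A) A
        ∘ (idm A ⊗ eta K A) ∘ runit_inv A = idm A;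
  eta_tens : forall A B,
      eqhom (f_equal (fun Y => tens Y (tens A B)) (dual_tens K A B)) ∘ eta K (tens A B)
      = assoc_inv (dual K A) (dual K B) (tens A B)
        ∘ (idm (dual K A) ⊗ assoc (dual K B) A B)
        ∘ (idm (dual K A) ⊗ (sym A (dual K B) ⊗ idm B))
        ∘ (idm (dual K A) ⊗ assoc_inv A (dual K B) B)
        ∘ assoc (dual K A) A (tens (dual K B) B)
        ∘ (eta K A ⊗ eta K B) ∘ lunit_inv unit
}.

Definition transp (A B : obj C) (f : hom A B) : hom (dual K B) (dual K A) :=
  runit (dual K A) ∘ (idm (dual K A) ⊗ dagger (eta_dual B))
  ∘ (idm (dual K A) ⊗ (f ⊗ idm (dual K B)))
  ∘ assoc (dual K A) A (dual K B)
  ∘ (eta K A ⊗ idm (dual K B)) ∘ lunit_inv (dual K B).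

Definition conjm (A B : obj C) (f : hom A B) : hom (dual K A) (dual K B) :=
  transp (dagger f).

Definition comm_comonoid (X : obj C) (d : hom X (tens X X)) (e : hom X unit) : Prop :=
  assoc X X X ∘ (d ⊗ idm X) ∘ d = (idm X ⊗ d) ∘ d /\
  lunit X ∘ (e ⊗ idm X) ∘ d = idm X /\
  runit X ∘ (idm X ⊗ e) ∘ d = idm X /\
  sym X X ∘ d = d.

Definition etaX (X : obj C) (eX : dual K X = X) : hom unit (tens X X) :=
  eqhom (f_equal (fun Y => tens Y X) eX) ∘ eta K X.

Definition self_adjoint (X : obj C) (eX : dual K X = X)
    (d : hom X (tens X X)) (e : hom X unit) : Prop :=
  etaX eX = d ∘ dagger e /\
  d = (idm X ⊗ dagger d) ∘ assoc X X X ∘ (etaX eX ⊗ idm X) ∘ lunit_inv X.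

End Compact.

Arguments eta_dual {_} K A.
Arguments transp {_} K {A B} f.
Arguments conjm {_} K {A B} f.
Arguments etaX {_} K {X} eX.

(* Write [cup := d ∘ e†] for the unit of the self-duality X* = X.  Cocommutativity
   makes the cup symmetric, and self-adjointness says that the comultiplication is
   the cup followed by the multiplication [d†]; dually, [d†] is the cap [cup†] after
   [1 ⊗ d].  Substituting the latter into [d ∘ d†] and using coassociativity turns
   it into the right-hand side of the Frobenius law.  Inserting a symmetry in the
   self-adjointness equation and using the same formula for [d†] gives the
   partial-transpose invariance.  Finally, [d_*] is computed with the canonical cup
   of X ⊗ X; sliding [d†] through that cup (by the partial-transpose invariance)
   leaves a zigzag [(d ⊗ 1) ∘ cup] capped by [cup†], which the snake equation
   straightens to [d]. *)

From Stdlib Require Import ProofIrrelevance.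
From Corelib Require Import ssreflect.

Section Coherence.
Context {C : DagSMCData} (HC : isDagSMC C).
Local Notation compA := (comp_assoc HC).
Local Notation comp1f := (comp_idl HC).
Local Notation compf1 := (comp_idr HC).

(* Composites are kept left-nested; these lemmas rewrite a factor of such a chain. *)
Lemma chain_rewrite2 {A B C0 D : obj C} {h : hom C0 D} {g : hom B C0} {f : hom A B} {k} :
  g ∘ f = k -> h ∘ g ∘ f = h ∘ k.
Proof. by move=> E; rewrite -compA E. Qed.

Lemma chain_rewrite3 {A B C0 D E : obj C}
    {h : hom D E} {g3 : hom C0 D} {g : hom B C0} {f : hom A B} {k} :
  g3 ∘ g ∘ f = k -> h ∘ g3 ∘ g ∘ f = h ∘ k.
Proof. by move=> E'; rewrite -!compA -E' !compA. Qed.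

Lemma chain_rewrite4 {A B C0 D E F : obj C}
    {h : hom E F} {g4 : hom D E} {g3 : hom C0 D} {g : hom B C0} {f : hom A B} {k} :
  g4 ∘ g3 ∘ g ∘ f = k -> h ∘ g4 ∘ g3 ∘ g ∘ f = h ∘ k.
Proof. by move=> E'; rewrite -!compA -E' !compA. Qed.

Ltac assoc_left := rewrite ?compA.
Tactic Notation "rw" uconstr(E) :=
  first [ rewrite (chain_rewrite4 E) | rewrite (chain_rewrite3 E)
        | rewrite (chain_rewrite2 E) | rewrite E ]; assoc_left.
Ltac on_lhs t := match goal with |- _ = ?R =>
  let r := fresh "r" in let Er := fresh "Er" in remember R as r eqn:Er; t; subst r end.
Ltac on_rhs t := match goal with |- ?L = _ =>
  let l := fresh "l" in let El := fresh "El" in remember L as l eqn:El; t; subst l end.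

Lemma comp_tens {A1 B1 C1 A2 B2 C2 : obj C}
    (g1 : hom B1 C1) (f1 : hom A1 B1) (g2 : hom B2 C2) (f2 : hom A2 B2) :
  (g1 ⊗ g2) ∘ (f1 ⊗ f2) = (g1 ∘ f1) ⊗ (g2 ∘ f2).
Proof. by rewrite (tens_comp HC). Qed.

Ltac cancel_isos := assoc_left; repeat progress (rewrite ?comp1f ?compf1 ?(tens_id HC)
  ?(assoc_invl HC) ?(assoc_invr HC)
  ?(chain_rewrite2 (assoc_invl HC _ _ _)) ?(chain_rewrite2 (assoc_invr HC _ _ _))
  ?(lunit_invl HC) ?(lunit_invr HC)
  ?(chain_rewrite2 (lunit_invl HC _)) ?(chain_rewrite2 (lunit_invr HC _))
  ?(runit_invl HC) ?(runit_invr HC)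
  ?(chain_rewrite2 (runit_invl HC _)) ?(chain_rewrite2 (runit_invr HC _))
  ?(sym_invol HC) ?(chain_rewrite2 (sym_invol HC _ _)); assoc_left).

Lemma tens_compl {A B D : obj C} (E : obj C) (g : hom B D) (f : hom A B) :
  (g ∘ f) ⊗ idm E = (g ⊗ idm E) ∘ (f ⊗ idm E).
Proof. by rewrite -(tens_comp HC) comp1f. Qed.

Lemma tens_compr {A B D : obj C} (E : obj C) (g : hom B D) (f : hom A B) :
  idm E ⊗ (g ∘ f) = (idm E ⊗ g) ∘ (idm E ⊗ f).
Proof. by rewrite -(tens_comp HC) comp1f. Qed.

Lemma tens_splitl {A B A' B' : obj C} (f : hom A B) (g : hom A' B') :
  f ⊗ g = (idm B ⊗ g) ∘ (f ⊗ idm A').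
Proof. by rewrite -(tens_comp HC) comp1f compf1. Qed.

Lemma tens_splitr {A B A' B' : obj C} (f : hom A B) (g : hom A' B') :
  f ⊗ g = (f ⊗ idm B') ∘ (idm A ⊗ g).
Proof. by rewrite -(tens_comp HC) comp1f compf1. Qed.

Lemma eqhom_id (A : obj C) (p : A = A) : eqhom p = idm A.
Proof. by rewrite (proof_irrelevance _ p eq_refl). Qed.

Lemma split_epi_cancel {A B D : obj C} (f g : hom B D) (p : hom A B) (s : hom B A) :
  p ∘ s = idm B -> f ∘ p = g ∘ p -> f = g.
Proof. by move=> ps E; rewrite -(compf1 f) -(compf1 g) -ps !compA E. Qed.

Lemma split_mono_cancel {A B D : obj C} (f g : hom A B) (m : hom B D) (r : hom D B) :
  r ∘ m = idm B -> m ∘ f = m ∘ g -> f = g.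
Proof. by move=> rm E; rewrite -(comp1f f) -(comp1f g) -rm -!compA E. Qed.

Lemma tens_idl_inj {A B : obj C} (f g : hom A B) : idm unit ⊗ f = idm unit ⊗ g -> f = g.
Proof.
  have unfold_l (h : hom A B) : h = lunit B ∘ (idm unit ⊗ h) ∘ lunit_inv A.
  { by rewrite (lunit_nat HC) -compA (lunit_invr HC) compf1. }
  by move=> E; rewrite (unfold_l f) (unfold_l g) E.
Qed.

Lemma tens_idr_inj {A B : obj C} (f g : hom A B) : f ⊗ idm unit = g ⊗ idm unit -> f = g.
Proof.
  have unfold_r (h : hom A B) : h = runit B ∘ (h ⊗ idm unit) ∘ runit_inv A.
  { by rewrite (runit_nat HC) -compA (runit_invr HC) compf1. }
  by move=> E; rewrite (unfold_r f) (unfold_r g) E.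
Qed.

Lemma assoc_inv_nat {A1 A2 A3 B1 B2 B3 : obj C} (f : hom A1 B1) (g : hom A2 B2) (h : hom A3 B3) :
  assoc_inv B1 B2 B3 ∘ (f ⊗ (g ⊗ h)) = ((f ⊗ g) ⊗ h) ∘ assoc_inv A1 A2 A3.
Proof.
  apply: (split_mono_cancel _ _ (assoc B1 B2 B3) (assoc_inv B1 B2 B3)); first exact: assoc_invl.
  by assoc_left; rewrite (assoc_nat HC); cancel_isos.
Qed.

Lemma pentagon_inv (A B C0 D : obj C) :
  (assoc_inv A B C0 ⊗ idm D) ∘ assoc_inv A (tens B C0) D ∘ (idm A ⊗ assoc_inv B C0 D)
  = assoc_inv (tens A B) C0 D ∘ assoc_inv A B (tens C0 D).
Proof.
  have := f_equal dagger (pentagon HC A B C0 D).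
  rewrite !(dagger_comp HC) !(dagger_tens HC) !(dagger_id HC) !(dagger_assoc HC).
  by assoc_left.
Qed.

(* Kelly's coherence lemmas, derived from the pentagon and triangle axioms. *)
Lemma lunit_assoc (A B : obj C) : lunit (tens A B) ∘ assoc unit A B = lunit A ⊗ idm B.
Proof.
  apply: tens_idl_inj.
  apply: (split_epi_cancel _ _ (assoc unit (tens unit A) B ∘ (assoc unit unit A ⊗ idm B))
     ((assoc_inv unit unit A ⊗ idm B) ∘ assoc_inv unit (tens unit A) B)).
  { by assoc_left; rw (comp_tens _ _ _ _); cancel_isos. }
  rewrite -{1}(comp1f (idm unit)) -comp_tens; assoc_left.
  rw (pentagon HC _ _ _ _).
  rw (triangle HC _ _); rewrite -(tens_id HC A B) -(assoc_nat HC) -(assoc_nat HC).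
  by rw (comp_tens _ _ _ _); rewrite (triangle HC) comp1f.
Qed.

Lemma lunit_assoc_inv (A B : obj C) :
  (lunit A ⊗ idm B) ∘ assoc_inv unit A B = lunit (tens A B).
Proof. by rewrite -lunit_assoc; cancel_isos. Qed.

Lemma runit_assoc (A B : obj C) : (idm A ⊗ runit B) ∘ assoc A B unit = runit (tens A B).
Proof.
  apply: tens_idr_inj.
  apply: (split_mono_cancel _ _ (assoc A B unit) (assoc_inv A B unit)); first exact: assoc_invl.
  on_rhs ltac:(rewrite -(triangle HC); assoc_left; rewrite -(tens_id HC A B);
    rw (assoc_nat HC _ _ _); rw (eq_sym (pentagon HC _ _ _ _)); rw (comp_tens _ _ _ _);
    rewrite comp1f (triangle HC); rw (eq_sym (assoc_nat HC _ _ _));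
    rw (comp_tens _ _ _ _); rewrite comp1f).
  by [].
Qed.

Lemma assoc_unitr (A B : obj C) :
  assoc A B unit = (idm A ⊗ runit_inv B) ∘ runit (tens A B).
Proof. by rewrite -runit_assoc; assoc_left; rw (comp_tens _ _ _ _); cancel_isos. Qed.

Lemma lunit_unit : lunit (unit (d := C)) = runit unit.
Proof.
  apply: tens_idr_inj; rewrite -(triangle HC) -lunit_assoc.
  have -> : lunit (tens (unit (d := C)) unit) = idm unit ⊗ lunit unit.
  { apply: (split_mono_cancel _ _ (lunit unit) (lunit_inv unit)); first exact: lunit_invl.
    by rewrite (lunit_nat HC). }
  by [].
Qed.

Lemma lunit_sym (A : obj C) : lunit A ∘ sym A unit = runit A.
Proof.
  symmetry; apply: tens_idr_inj.
  apply: (split_mono_cancel _ _ (sym A unit) (sym unit A)); first exact: sym_invol.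
  on_lhs ltac:(rewrite -(triangle HC); assoc_left; rw (sym_nat HC _ _);
    rewrite -(lunit_assoc unit A); assoc_left; rw (hexagon HC _ _ _);
    rw (lunit_nat HC _); rw (lunit_assoc _ _);
    rw (comp_tens _ _ _ _); rewrite comp1f).
  by [].
Qed.

Lemma sym_runit_inv (A : obj C) : sym A unit ∘ runit_inv A = lunit_inv A.
Proof.
  apply: (split_mono_cancel _ _ (lunit A) (lunit_inv A)); first exact: lunit_invl.
  by assoc_left; rewrite lunit_sym; cancel_isos.
Qed.

Lemma hexagon_sym_assoc (A B C0 : obj C) : sym A (tens B C0) ∘ assoc A B C0 =
  assoc_inv B C0 A ∘ (idm B ⊗ sym A C0) ∘ assoc B A C0 ∘ (sym A B ⊗ idm C0).
Proof.
  apply: (split_mono_cancel _ _ (assoc B C0 A) (assoc_inv B C0 A)); first exact: assoc_invl.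
  by assoc_left; rewrite (hexagon HC); cancel_isos.
Qed.

Lemma hexagon_assoc_sym (A B C0 : obj C) : assoc B A C0 ∘ sym C0 (tens B A) =
  (idm B ⊗ sym C0 A) ∘ assoc B C0 A ∘ (sym C0 B ⊗ idm A) ∘ assoc_inv C0 B A.
Proof.
  apply: (split_epi_cancel _ _ (assoc C0 B A) (assoc_inv C0 B A)); first exact: assoc_invr.
  by assoc_left; rewrite (hexagon HC); cancel_isos.
Qed.

Lemma hexagon_sym_assocl (A B C0 : obj C) : assoc B A C0 ∘ (sym A B ⊗ idm C0) =
  (idm B ⊗ sym C0 A) ∘ assoc B C0 A ∘ sym A (tens B C0) ∘ assoc A B C0.
Proof.
  apply: (split_mono_cancel _ _ (idm B ⊗ sym A C0) (idm B ⊗ sym C0 A)).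
  { by rewrite comp_tens comp1f (sym_invol HC) (tens_id HC). }
  by assoc_left; rewrite -(hexagon HC); rw (comp_tens _ _ _ _); cancel_isos.
Qed.

Lemma sym_assoc_sym (A B C0 : obj C) :
  sym A (tens B C0) ∘ assoc A B C0 ∘ sym C0 (tens A B) =
  (sym C0 B ⊗ idm A) ∘ assoc_inv C0 B A ∘ (idm C0 ⊗ sym A B).
Proof.
  rewrite hexagon_sym_assoc; rw (eq_sym (sym_nat HC (idm C0) (sym A B))).
  by rw (hexagon_assoc_sym _ _ _); rw (comp_tens _ _ _ _); cancel_isos.
Qed.

Lemma zigzag_mirror (A B C0 : obj C) (h : hom unit (tens A B)) (g : hom (tens B C0) unit) :
  runit A ∘ (idm A ⊗ g) ∘ assoc A B C0 ∘ (h ⊗ idm C0) ∘ lunit_inv C0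
  = lunit A ∘ ((g ∘ sym C0 B) ⊗ idm A) ∘ assoc_inv C0 B A
      ∘ (idm C0 ⊗ (sym A B ∘ h)) ∘ runit_inv C0.
Proof.
  rewrite -lunit_sym -sym_runit_inv; assoc_left.
  rw (sym_nat HC _ _); rw (eq_sym (sym_nat HC (idm C0) h)).
  by rw (sym_assoc_sym _ _ _); rw (comp_tens _ _ _ _); rw (comp_tens _ _ _ _); cancel_isos.
Qed.

Section SelfAdjointComonoid.
Context {X : obj C} {d : hom X (tens X X)} {e : hom X unit} {cup : hom unit (tens X X)}.
Hypothesis comul_coassoc : assoc X X X ∘ (d ⊗ idm X) ∘ d = (idm X ⊗ d) ∘ d.
Hypothesis comul_comm : sym X X ∘ d = d.
Hypothesis cup_comul : cup = d ∘ dagger e.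
Hypothesis cup_snake :
  lunit X ∘ (dagger cup ⊗ idm X) ∘ assoc_inv X X X ∘ (idm X ⊗ cup) ∘ runit_inv X
  = idm X.
Hypothesis comul_self_adjoint :
  d = (idm X ⊗ dagger d) ∘ assoc X X X ∘ (cup ⊗ idm X) ∘ lunit_inv X.

(* The cup of X ⊗ X prescribed by [eta_tens]. *)
Definition cup_tens : hom unit (tens (tens X X) (tens X X)) :=
  assoc_inv X X (tens X X) ∘ (idm X ⊗ assoc X X X) ∘ (idm X ⊗ (sym X X ⊗ idm X))
  ∘ (idm X ⊗ assoc_inv X X X) ∘ assoc X X (tens X X) ∘ (cup ⊗ cup) ∘ lunit_inv unit.

Lemma sym_cup : sym X X ∘ cup = cup.
Proof. by rewrite cup_comul compA comul_comm. Qed.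

Lemma cap_sym : dagger cup ∘ sym X X = dagger cup.
Proof. by rewrite -(dagger_sym HC) -(dagger_comp HC) sym_cup. Qed.

Lemma mult_sym : dagger d ∘ sym X X = dagger d.
Proof. by rewrite -(dagger_sym HC) -(dagger_comp HC) comul_comm. Qed.

Lemma comul_coassoc_inv : (d ⊗ idm X) ∘ d = assoc_inv X X X ∘ (idm X ⊗ d) ∘ d.
Proof. by rewrite -compA -comul_coassoc; cancel_isos. Qed.

Lemma mult_self_adjoint :
  dagger d = lunit X ∘ (dagger cup ⊗ idm X) ∘ assoc_inv X X X ∘ (idm X ⊗ d).
Proof.
  rewrite {1}comul_self_adjoint.
  rewrite !(dagger_comp HC) !(dagger_tens HC) !(dagger_id HC) (dagger_assoc HC).
  by rewrite (dagger_invol HC) -(dagger_lunit HC) (dagger_invol HC); assoc_left.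
Qed.

Lemma cup_snake_mirror :
  runit X ∘ (idm X ⊗ dagger cup) ∘ assoc X X X ∘ (cup ⊗ idm X) ∘ lunit_inv X = idm X.
Proof. by rewrite zigzag_mirror cap_sym sym_cup. Qed.

Lemma frobenius : d ∘ dagger d = (dagger d ⊗ idm X) ∘ assoc_inv X X X ∘ (idm X ⊗ d).
Proof.
  rewrite !mult_self_adjoint; assoc_left.
  on_rhs ltac:(rewrite !tens_compl; assoc_left; rw (eq_sym (assoc_inv_nat _ _ _));
    rw (comp_tens _ _ _ _); rewrite comp1f comul_coassoc_inv !tens_compr; assoc_left;
    rw (pentagon_inv _ _ _ _); rw (assoc_inv_nat _ _ _); rewrite (tens_id HC);
    rw (eq_sym (assoc_inv_nat _ _ _)); rewrite (tens_id HC); rw (comp_tens _ _ _ _);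
    rewrite comp1f compf1 (tens_splitl (dagger cup) d); assoc_left;
    rw (lunit_assoc_inv _ _); rw (lunit_nat HC _)).
  by [].
Qed.

Lemma comul_sym_self_adjoint :
  (idm X ⊗ dagger d) ∘ assoc X X X ∘ (sym X X ⊗ idm X) ∘ assoc_inv X X X
    ∘ (idm X ⊗ cup) ∘ runit_inv X = d.
Proof.
  rw (hexagon_sym_assocl _ _ _); cancel_isos.
  rw (sym_nat HC _ _); rw (sym_runit_inv _); rw (comp_tens _ _ _ _).
  by rewrite comp1f mult_sym -comul_self_adjoint.
Qed.

Lemma comul_partial_transpose :
  (idm X ⊗ lunit X) ∘ (idm X ⊗ (dagger cup ⊗ idm X))
    ∘ (idm X ⊗ assoc_inv X X X) ∘ assoc X X (tens X X)
    ∘ (sym X X ⊗ d) ∘ assoc_inv X X X ∘ (idm X ⊗ cup) ∘ runit_inv X = d.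
Proof.
  rewrite (tens_splitl (sym X X) d) -(tens_id HC X X); assoc_left.
  rw (assoc_nat HC _ _ _); rw (comp_tens _ _ _ _); rw (comp_tens _ _ _ _);
  rw (comp_tens _ _ _ _).
  by rewrite !comp1f -mult_self_adjoint comul_sym_self_adjoint.
Qed.

Lemma cup_tens_mult : (idm (tens X X) ⊗ dagger d) ∘ cup_tens = (d ⊗ idm X) ∘ cup.
Proof.
  rewrite /cup_tens; assoc_left; rewrite -(tens_id HC X X).
  rw (eq_sym (assoc_inv_nat _ _ _)).
  rw (comp_tens _ _ _ _); rw (comp_tens _ _ _ _); rw (comp_tens _ _ _ _); rewrite !comp1f.
  rewrite (tens_splitl cup cup) -(tens_id HC X X); assoc_left; rw (assoc_nat HC _ _ _).
  rw (comp_tens _ _ _ _); rewrite comp1f assoc_unitr; assoc_left.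
  rw (comp_tens _ _ _ _); rewrite comp1f comul_sym_self_adjoint.
  rw (runit_nat HC _); rewrite -lunit_unit; cancel_isos.
  by rewrite cup_comul; assoc_left; rewrite comul_coassoc_inv.
Qed.

Lemma comul_conj :
  runit (tens X X) ∘ (idm (tens X X) ⊗ dagger cup) ∘ (idm (tens X X) ⊗ (dagger d ⊗ idm X))
    ∘ assoc (tens X X) (tens X X) X ∘ (cup_tens ⊗ idm X) ∘ lunit_inv X = d.
Proof.
  have slide : (idm (tens X X) ⊗ (dagger d ⊗ idm X)) ∘ assoc (tens X X) (tens X X) X
      ∘ (cup_tens ⊗ idm X) = assoc (tens X X) X X ∘ (((d ⊗ idm X) ∘ cup) ⊗ idm X).
  { by rewrite -(assoc_nat HC) -compA comp_tens comp1f cup_tens_mult. }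
  rw slide; rewrite tens_compl; assoc_left.
  rw (assoc_nat HC _ _ _); rewrite (tens_id HC); rw (comp_tens _ _ _ _).
  rewrite comp1f compf1 (tens_splitr d (dagger cup)); assoc_left; rw (runit_nat HC _).
  by have := f_equal (comp d) cup_snake_mirror; rewrite compf1 !compA.
Qed.

End SelfAdjointComonoid.
End Coherence.

Theorem mainTheorem3 (C : DagSMCData) (HC : isDagSMC C)
    (K : CompactData C) (HK : isDagCompact K)
    (X : obj C) (d : hom X (tens X X)) (e : hom X unit)
    (eX : dual K X = X)
    (Hcom : comm_comonoid d e) (Hsa : self_adjoint eX d e) :
  (* (i) Frobenius identity *)
  d ∘ dagger d = (dagger d ⊗ idm X) ∘ assoc_inv X X X ∘ (idm X ⊗ d)
  /\
  (* (ii) invariance under partial transpose *)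
  (idm X ⊗ lunit X) ∘ (idm X ⊗ (dagger (etaX K eX) ⊗ idm X))
    ∘ (idm X ⊗ assoc_inv X X X) ∘ assoc X X (tens X X)
    ∘ (sym X X ⊗ d) ∘ assoc_inv X X X ∘ (idm X ⊗ etaX K eX) ∘ runit_inv X
  = d
  /\
  (* (iii) d_* = d, read as X -> X (x) X via X* = X, (X (x) X)* = X* (x) X* = X (x) X *)
  eqhom (f_equal2 tens eX eX) ∘ eqhom (dual_tens K X X) ∘ conjm K d ∘ eqhom (eq_sym eX)
  = d.
Proof.
  have [coassoc [_ [_ comm]]] := Hcom.
  have := eta_dual_sym HK X; have := yanking HK X; have := eta_tens HK X X.
  move: Hsa; rewrite /self_adjoint /conjm /transp /eta_dual /etaX.
  (* Abstracting the duals lets us eliminate [X* = X], [X** = X] and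
     [(X ⊗ X)* = X* ⊗ X*]; the opaque [f_equal2 tens eX eX] then survives as some
     proof of [X ⊗ X = X ⊗ X], removed by [eqhom_id]. *)
  move: (f_equal2 tens eX eX) (dual_tens K X X) (dual_invol K X).
  move: (eta K (tens X X)) (eta K (dual K X)) (eta K X).
  move: (dual K (tens X X)) (dual K (dual K X)) eX; move: (dual K X).
  move=> D DXX DD eX cupXX cupXd cup E2 DT DI; subst; rewrite eqhom_id /=.
  rewrite !(comp_idl HC) (comp_idr HC).
  move=> [cup_comul comul_sa] cupXX_def snake cupXd_def.
  have cupXd_cup : cupXd = cup by rewrite cupXd_def cup_comul (comp_assoc HC) comm.
  rewrite {}cupXd_cup in snake *.
  split; [|split].
  - by apply: (frobenius (cup := cup) HC).
  - by apply: (comul_partial_transpose (cup := cup) HC).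
  - subst cupXX; rewrite eqhom_id !(comp_idl HC).
    by apply: (comul_conj (e := e) (cup := cup) HC).
Qed.
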